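(* Let $\langle U,B\rangle$ be a 3-frame (i.e. $U\neq\emptyset$ and $B\subseteq U^3$), and define for $X,Y\subseteq U$ $\langle B\rangle(X,Y)=\{u\in U\mid \exists x\in X\,\exists y\in Y\, B(x,u,y)\}$ and $[\![B]\!](X,Y)=\{u\in U\mid \forall x\in X\,\forall y\in Y\, B(x,u,y)\}$. Then: (i) $B(a,a,a)$ for all $a\in U$ iff $X\subseteq\langle B\rangle(X,X)$ for all $X\subseteq U$; (ii) ($B(a,b,c)\Rightarrow B(c,b,a)$ for all $a,b,c$) iff $\langle B\rangle(X,Y)\subseteq\langle B\rangle(Y,X)$ for all $X,Y\subseteq U$; (iii) ($B(a,b,c)\Rightarrow B(c,b,a)$ for all $a,b,c$) iff $[\![B]\!](X,Y)\subseteq[\![B]\!](Y,X)$ for all $X,Y\subseteq U$; (iv) ($B(a,b,c)\Rightarrow B(a,a,b)$ for all $a,b,c$) iff $Y\cap\langle B\rangle(X,Z)\subseteq\langle B\rangle(X\cap\langle B\rangle(X,Y),Z)$ for all $X,Y,Z\subseteq U$; (v) ($B(a,b,c)\wedge B(a,c,b)\Rightarrow b=c$ for all $a,b,c$) iff $\langle B\rangle\big(X,[\![B]\!](X,U\setminus Y)\cap Y\big)\subseteq Y$ for all $X,Y\subseteq U$; (vi) ($B(a,b,a)\Rightarrow a=b$ for all $a,b$) iff $[\![B]\!](X,X)\subseteq X$ for all non-empty $X\subseteq U$; (vii) ($B(a,a,b)$ for all $a,b$) iff $X\subseteq\langle B\rangle(X,Y)$ for all $X\subseteq U$ and all non-empty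 $Y\subseteq U$. *)

From mathcomp Require Import all_boot.
From mathcomp Require Export classical_sets.
Set Implicit Arguments. Unset Strict Implicit. Unset Printing Implicit Defensive.
Local Open Scope classical_set_scope.

Definition diamB {U : Type} (B : U -> U -> U -> Prop) (X Y : set U) : set U :=
  [set u | exists x y, [/\ X x, Y y & B x u y]].

Definition boxB {U : Type} (B : U -> U -> U -> Prop) (X Y : set U) : set U :=
  [set u | forall x y, X x -> Y y -> B x u y].

From mathcomp Require Import all_boot boolp classical_sets.
Set Implicit Arguments. Unset Strict Implicit. Unset Printing Implicit Defensive.
Local Open Scope classical_set_scope.

(** Forward, the inclusion is checked pointwise
    from the condition; backward, the inclusion is instantiated at singletons,
    where both [diamB B [set a] [set c]] and [boxB B [set a] [set c]] are
    exactly [[set b | B a b c]]. *)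

Section FrameCorrespondence.

Variables (U : Type) (B : U -> U -> U -> Prop).

Lemma diamB_set1 a b c : diamB B [set a] [set c] b <-> B a b c.
Proof. by split=> [[x [y [-> -> //]]]|Babc]; exists a, c. Qed.

Lemma boxB_set1 a b c : boxB B [set a] [set c] b <-> B a b c.
Proof. by split=> [/(_ a c erefl erefl) //|Babc x y -> ->]. Qed.

Lemma diag_iff_sub_diamB :
  (forall a, B a a a) <-> (forall X : set U, X `<=` diamB B X X).
Proof.
split=> [Bdiag X u Xu|subX a]; first by exists u, u.
by apply/diamB_set1/subX.
Qed.

Lemma sym_iff_diamB_sub_swap :
  (forall a b c, B a b c -> B c b a) <->
  (forall X Y : set U, diamB B X Y `<=` diamB B Y X).
Proof.
split=> [Bsym X Y u [x [y [Xx Yy Bxuy]]]|swap a b c /diamB_set1 Babc].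
  by exists y, x; split; last exact: Bsym.
exact/diamB_set1/swap.
Qed.

Lemma sym_iff_boxB_sub_swap :
  (forall a b c, B a b c -> B c b a) <->
  (forall X Y : set U, boxB B X Y `<=` boxB B Y X).
Proof.
split=> [Bsym X Y u boxu x y Xx Yy|swap a b c /boxB_set1 Babc].
  exact/Bsym/boxu.
exact/boxB_set1/swap.
Qed.

Lemma left_absorb_iff_sub_diamB_restrict :
  (forall a b c, B a b c -> B a a b) <->
  (forall X Y Z : set U,
     Y `&` diamB B X Z `<=` diamB B (X `&` diamB B X Y) Z).
Proof.
split=> [Babs X Y Z u [Yu [x [z [Xx Zz Bxuz]]]]|restrict a b c Babc].
  exists x, z; split=> //; split=> //.
  by exists x, u; split=> //; exact: Babs Bxuz.
have [|x [z [[-> Bab] _ _]]] := restrict [set a] [set b] [set c] b.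
  by split=> //; exact/diamB_set1.
exact/diamB_set1.
Qed.

Lemma antisym_iff_diamB_boxC_sub :
  (forall a b c, B a b c -> B a c b -> b = c) <->
  (forall X Y : set U, diamB B X (boxB B X (~` Y) `&` Y) `<=` Y).
Proof.
split=> [Banti X Y u [x [y [Xx [boxy Yy] Bxuy]]]|sub a b c Babc Bacb].
  have [//|nYu] := pselect (Y u).
  by rewrite (Banti x u y Bxuy (boxy x u Xx nYu)).
apply: contrapT => neq_bc.
have : (~` [set b]) b; last by apply.
apply: (sub [set a]); exists a, c; split=> //; split; last by move=> /esym.
by rewrite setCK; exact/boxB_set1.
Qed.

Lemma loopfree_iff_boxB_diag_sub :
  (forall a b, B a b a -> a = b) <->
  (forall X : set U, X !=set0 -> boxB B X X `<=` X).
Proof.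
split=> [Bloop X [x Xx] u boxu|sub a b Baba].
  by rewrite -(Bloop x u (boxu x x Xx Xx)).
by apply/esym/(sub [set a]); [exists a | exact/boxB_set1].
Qed.

Lemma left_refl_iff_sub_diamB :
  (forall a b, B a a b) <->
  (forall X Y : set U, Y !=set0 -> X `<=` diamB B X Y).
Proof.
split=> [Brefl X Y [y Yy] x Xx|sub a b]; first by exists x, y.
by apply/diamB_set1/(sub _ [set b]); first exists b.
Qed.

End FrameCorrespondence.

Theorem theorem20 (U : Type) (B : U -> U -> U -> Prop) (hU : [set: U] !=set0) :
  ((forall a, B a a a) <-> (forall X : set U, X `<=` diamB B X X)) /\
  ((forall a b c, B a b c -> B c b a) <->
     (forall X Y : set U, diamB B X Y `<=` diamB B Y X)) /\
  ((forall a b c, B a b c -> B c b a) <->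
     (forall X Y : set U, boxB B X Y `<=` boxB B Y X)) /\
  ((forall a b c, B a b c -> B a a b) <->
     (forall X Y Z : set U,
        Y `&` diamB B X Z `<=` diamB B (X `&` diamB B X Y) Z)) /\
  ((forall a b c, B a b c -> B a c b -> b = c) <->
     (forall X Y : set U, diamB B X (boxB B X (~` Y) `&` Y) `<=` Y)) /\
  ((forall a b, B a b a -> a = b) <->
     (forall X : set U, X !=set0 -> boxB B X X `<=` X)) /\
  ((forall a b, B a a b) <->
     (forall X Y : set U, Y !=set0 -> X `<=` diamB B X Y)).
Proof.
split; first exact: diag_iff_sub_diamB.
split; first exact: sym_iff_diamB_sub_swap.
split; first exact: sym_iff_boxB_sub_swap.
split; first exact: left_absorb_iff_sub_diamB_restrict.
split; first exact: antisym_iff_diamB_boxC_sub.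
split; first exact: loopfree_iff_boxB_diag_sub.
exact: left_refl_iff_sub_diamB.
Qed.
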